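(* Let $k\geq0$, $q\geq1$, $m\ge1$ and $\gamma=(\gamma_1,\ldots,\gamma_m)\in\mathbb{Z}^m$ with $\gamma_1\ge 2$ and $2\le\gamma_{i+1}\le\gamma_i+1$ for all $1\le i<m$. Then \[F^{1234}(k,q,\gamma)=\begin{cases} s^k & m=1,\\ F^{2143}(k,q,\gamma) & q=1,\\ F^{1234}(k,q{-}1,\gamma)+F^{1234}(\gamma_1{+}1{-}\gamma_2{+}k,q,\gamma') & m\geq2,\ q\geq2. \end{cases}\]
   Context: For $\pi\in\{1234,2143\}$ define successor functions on integer triples. $\mathrm{suc}^{2143}(x,y,z)=\emptyset$ if $z\le0$ and for $z\ge1$, $\mathrm{suc}^{2143}(x,y,z)=\{(2,y{+}1,z),\ldots,(x{+}1,y{+}1,z)\}\cup\{(x,x{+}1,z),\ldots,(x,y,z)\}\cup\mathrm{suc}^{2143}(x,x,z{-}1)$. $\mathrm{suc}^{1234}(x,y,1)=\{(2,y{+}1,1),\ldots,(x{+}1,y{+}1,1)\}\cup\{(x,x{+}1,1),\ldots,(x,y,1)\}$ and for $z\ge2$, $\mathrm{suc}^{1234}(x,y,z)=\{(2,y{+}1,z),\ldots,(x{+}1,y{+}1,z)\}\cup\mathrm{suc}^{1234}(x,y,z{-}1)$ (sets of the form $\{(x,x{+}1,\cdot),\ldots,(x,y,\cdot)\}$ are empty if $y\le x$). A path in $\mathcal{P}^{\pi}$ is a finite sequence $P=(v_1,\ldots,v_r)$, $r\ge1$, of points of $\mathbb{Z}^3$ with $v_1=(x,y,z)$, $2\le x\le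 y$, $z\ge1$, and $v_{i+1}\in\mathrm{suc}^{\pi}(v_i)$; its length is $\ell(P)=r$. For $P\in\mathcal{P}^{2143}$, an edge from $(x_1,y_1,z_1)$ to $(x_2,y_2,z_2)$ is recorded if either $z_1=z_2$ and $y_2=y_1+1$, or $z_1>z_2$. For $P\in\mathcal{P}^{1234}$, such an edge is recorded if $y_2=y_1+1$. The signature of $P$ is the tuple of the $x$-coordinate of $v_1$ followed by the $x$-coordinates of the endpoints of the recorded edges, in order. For $k\ge0$, $q\ge1$, $\gamma\in\mathbb{Z}^m$, $m\ge1$, $\mathcal{P}^{\pi}_{k,q,\gamma}$ is the set of paths in $\mathcal{P}^{\pi}$ starting at $(\gamma_1,\gamma_1+k,q)$ with signature $\gamma$, and $F^{\pi}(k,q,\gamma)=\sum_{P\in\mathcal{P}^{\pi}_{k,q,\gamma}}t^{\ell(P)-m}$ (formal power series in $t$), with the convention $F^{\pi}(k,q,\gamma)=0$ if $q\le0$ or $\gamma$ is empty. Write $s=1/(1-t)$ and $\gamma'=(\gamma_2,\ldots,\gamma_m)$ (empty if $m=1$). *)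

From mathcomp Require Import all_boot all_order all_algebra.
Set Implicit Arguments. Unset Strict Implicit. Unset Printing Implicit Defensive.
Import Order.TTheory GRing.Theory Num.Theory.
Local Open Scope ring_scope.

Definition point := (int * int * int)%type.
Definition px (v : point) : int := v.1.1.
Definition py (v : point) : int := v.1.2.
Definition pz (v : point) : int := v.2.

Definition irange (a b : int) : seq int :=
  if a <= b then [seq a + (i%:Z) | i <- iota 0 (absz (b - a + 1))] else [::].

Definition sucA (x y z : int) : seq point :=
  [seq (a, y + 1, z) | a <- irange 2 (x + 1)].
Definition sucB (x y z : int) : seq point :=
  [seq (x, b, z) | b <- irange (x + 1) y].

Fixpoint suc2143_aux (n : nat) (x y : int) : seq point :=
  match n with
  | 0%N => [::]
  | n'.+1 => sucA x y (Posz n) ++ sucB x y (Posz n) ++ suc2143_aux n' x x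
  end.

Definition suc2143 (v : point) : seq point :=
  if pz v <= 0 then [::] else undup (suc2143_aux (absz (pz v)) (px v) (py v)).

Fixpoint suc1234_aux (n : nat) (x y : int) : seq point :=
  match n with
  | 0%N => [::]
  | 1%N => sucA x y 1 ++ sucB x y 1
  | n'.+1 => sucA x y (Posz n) ++ suc1234_aux n' x y
  end.

(* suc^1234 is only specified for z >= 1; paths never reach z <= 0 *)
Definition suc1234 (v : point) : seq point :=
  if pz v <= 0 then [::] else undup (suc1234_aux (absz (pz v)) (px v) (py v)).

Inductive perm_kind := P1234 | P2143.

Definition suc (pi : perm_kind) : point -> seq point :=
  match pi with P1234 => suc1234 | P2143 => suc2143 end.

Fixpoint paths_from (sc : point -> seq point) (r : nat) (v : point)
  : seq (seq point) :=
  match r with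
  | 0%N => [::]
  | 1%N => [:: [:: v]]
  | r'.+1 => [seq v :: p | w <- sc v, p <- paths_from sc r' w]
  end.

Definition valid_start (v : point) : bool :=
  (2 <= px v) && (px v <= py v) && (1 <= pz v).

Definition recorded (pi : perm_kind) (v w : point) : bool :=
  match pi with
  | P2143 => ((pz v == pz w) && (py w == py v + 1)) || (pz w < pz v)
  | P1234 => py w == py v + 1
  end.

Fixpoint rec_ends (pi : perm_kind) (prev : point) (ws : seq point) : seq int :=
  match ws with
  | [::] => [::]
  | w :: ws' => (if recorded pi prev w then [:: px w] else [::])
                  ++ rec_ends pi w ws'
  end.

Definition signature (pi : perm_kind) (P : seq point) : seq int :=
  match P with
  | [::] => [::]
  | v :: ws => px v :: rec_ends pi v ws
  end.

Definition series := nat -> nat.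
Definition sadd (f g : series) : series := fun n => (f n + g n)%N.
Definition smul (f g : series) : series :=
  fun n => (\sum_(i < n.+1) f i * g (n - i))%N.
Definition sone : series := fun n => (n == 0)%N : nat.
(* s = 1/(1-t) = 1 + t + t^2 + ... *)
Definition s_series : series := fun _ => 1%N.
Definition spow (f : series) (k : nat) : series := iter k (smul f) sone.

Definition F (pi : perm_kind) (k q : int) (gamma : seq int) : series :=
  fun n =>
    if (q <= 0) || (gamma == [::]) then 0%N else
    let v := (head 0 gamma, head 0 gamma + k, q) in
    if valid_start v then
      count (fun P => signature pi P == gamma)
            (paths_from (suc pi) (n + size gamma) v)
    else 0%N.

(* A step of suc^1234 from (x,y,z) either stays in the bottom layer at
   level y (the unrecorded moves to (x,b,1), x < b <= y) or climbs to level
   y+1 in some layer z' <= z (a recorded move to (a,y+1,z'), 2 <= a <= x+1).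
   For m = 1 no recorded move is allowed, so a path is a strictly increasing
   walk of y in layer 1 with x fixed, and these walks are counted by the
   coefficients of s^k.  In layer 1 the two successor functions and the two
   notions of recorded edge coincide, which gives the case q = 1.  For q >= 2,
   suc^1234(x,y,q) is the union of the layer-q recorded moves and
   suc^1234(x,y,q-1); among the former only the move to (gamma_2,y+1,q) can
   produce the signature gamma, and the paths through it are those of
   F^1234(gamma_1+1-gamma_2+k, q, gamma'). *)
From mathcomp Require Import all_boot all_order all_algebra zify.
From Stdlib Require Import FunctionalExtensionality.
Import Order.TTheory GRing.Theory Num.Theory.
Local Open Scope ring_scope.

Lemma paths_from_step (sc : point -> seq point) r v : paths_from sc r.+2 v =
  flatten [seq [seq v :: p | p <- paths_from sc r.+1 w] | w <- sc v].
Proof. by []. Qed.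

Lemma paths_from_head {sc r v P} : P \in paths_from sc r v -> P = v :: behead P.
Proof.
case: r => [//|[|r]]; first by rewrite /= inE => /eqP->.
by rewrite paths_from_step => /flatten_mapP [w _ /mapP [p _ ->]].
Qed.

Lemma count_paths_from_step sc r v (a : pred (seq point)) :
  count a (paths_from sc r.+2 v) =
  (\sum_(w <- sc v) count (fun p => a (v :: p)) (paths_from sc r.+1 w))%N.
Proof.
rewrite paths_from_step count_flatten sumnE !big_map.
by apply: eq_bigr => w _; rewrite count_map.
Qed.

Lemma big_undup_subset (T : eqType) (s t : seq T) (f : T -> nat) :
  {subset t <= s} -> (forall w, w \in s -> w \notin t -> f w = 0%N) ->
  (\sum_(w <- undup s) f w = \sum_(w <- undup t) f w)%N.
Proof.
move=> sub_ts f0.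
rewrite (bigID (mem t)) /= [X in (_ + X)%N]big1_seq ?addn0; last first.
  by move=> w /andP [wt]; rewrite mem_undup => ws; apply: f0.
rewrite -big_filter; apply/perm_big/uniq_perm.
- exact/filter_uniq/undup_uniq.
- exact: undup_uniq.
move=> w; rewrite mem_filter !mem_undup /=.
by case wt: (w \in t) => //=; rewrite sub_ts.
Qed.

Lemma big_undup_cat_single (T : eqType) (A L : seq T) (f : T -> nat) w0 :
  w0 \in A -> w0 \notin L -> (forall w, w \in A -> w != w0 -> f w = 0%N) ->
  (\sum_(w <- undup (A ++ L)) f w = \sum_(w <- undup L) f w + f w0)%N.
Proof.
move=> w0A w0L f0.
rewrite (eq_bigr (fun w => (if w \in L then f w else 0) +
                           (if w \in L then 0 else f w))%N); last first.
  by move=> w _; case: ifP; rewrite ?addn0.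
rewrite big_split /=; congr (_ + _)%N.
  rewrite (@big_undup_subset _ _ L); last 2 first.
  - by move=> w wL; rewrite mem_cat wL orbT.
  - by move=> w _ /negbTE ->.
  by apply: eq_big_seq => w; rewrite mem_undup => ->.
rewrite (@big_undup_subset _ _ [:: w0]); last 2 first.
- by move=> w; rewrite inE => /eqP ->; rewrite mem_cat w0A.
- move=> w wAL; rewrite inE => w_neq; case: ifP => // wL; apply: f0 w_neq.
  by move: wAL; rewrite mem_cat wL orbF.
by rewrite /= big_seq1 (negbTE w0L).
Qed.

Lemma mem_irange (a b c : int) : (c \in irange a b) = (a <= c <= b).
Proof.
rewrite /irange; case: ifP => ab; last by rewrite in_nil; lia.
apply/mapP/idP => [[i]|c_ab]; first by rewrite mem_iota => /andP[_ ?] ->; lia.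
by exists (absz (c - a)); [rewrite mem_iota|]; lia.
Qed.

Lemma irange_iota (a : int) (j : nat) :
  irange a (a + j%:Z - 1) = [seq a + i%:Z | i <- iota 0 j].
Proof.
rewrite /irange; case: j => [|j]; first by rewrite ifF //; lia.
by rewrite ifT; [congr map; congr iota|]; lia.
Qed.

Lemma irange_uniq a b : uniq (irange a b).
Proof.
rewrite /irange; case: ifP => // _.
by rewrite map_inj_uniq ?iota_uniq // => i j /addrI; lia.
Qed.

Lemma mem_sucA x y z w : w \in sucA x y z ->
  [/\ py w = y + 1, pz w = z & 2 <= px w <= x + 1].
Proof. by case/mapP => a; rewrite mem_irange => ? ->. Qed.

Lemma mem_sucB x y z w : w \in sucB x y z ->
  [/\ px w = x, pz w = z & x + 1 <= py w <= y].
Proof. by case/mapP => a; rewrite mem_irange => ? ->. Qed.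

Lemma sucB_uniq x y z : uniq (sucB x y z).
Proof. by rewrite map_inj_uniq ?irange_uniq // => a b []. Qed.

Lemma suc1234_auxS x y (n : nat) : (1 <= n)%N ->
  suc1234_aux n.+1 x y = sucA x y (n.+1)%:Z ++ suc1234_aux n x y.
Proof. by case: n. Qed.

Lemma sucB1_sub_suc1234_aux x y (n : nat) : (1 <= n)%N ->
  {subset sucB x y 1 <= suc1234_aux n x y}.
Proof.
elim: n => [//|[|n] IHn] _ w wB; first by rewrite /= mem_cat wB orbT.
by rewrite suc1234_auxS // mem_cat IHn ?orbT.
Qed.

Lemma mem_suc1234_aux x y (n : nat) w : w \in suc1234_aux n x y ->
  w \in sucB x y 1 \/
  [/\ py w = y + 1, 1 <= pz w <= n%:Z & 2 <= px w <= x + 1].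
Proof.
elim: n => [//|[|n] IHn].
  rewrite /= mem_cat => /orP [/mem_sucA [-> -> ?]|]; [by right|by left].
rewrite suc1234_auxS // mem_cat => /orP [/mem_sucA [-> -> ?]|/IHn [|[]]].
- by right; split => //; lia.
- by left.
- by move=> -> ? ?; right; split => //; lia.
Qed.

Lemma suc1234_pos x y (z : int) : 1 <= z ->
  suc1234 (x, y, z) = undup (suc1234_aux (absz z) x y).
Proof. by move=> z_pos; rewrite /suc1234 /= ifF //; lia. Qed.

Lemma spow_s0 j : spow s_series j 0 = 1%N.
Proof. by elim: j => // j IHj; rewrite /spow iterS /smul big_ord1 mul1n. Qed.

Lemma spow_sSS j n :
  spow s_series j.+1 n.+1 = (spow s_series j.+1 n + spow s_series j n.+1)%N.
Proof.
rewrite {1}/spow iterS /smul big_ord_recl subn0 mul1n addnC.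
by congr (_ + _)%N; rewrite /spow iterS /smul; apply: eq_bigr => i _.
Qed.

Lemma spow_s_sum j n :
  spow s_series j n.+1 = (\sum_(i <- iota 0 j) spow s_series i.+1 n)%N.
Proof.
elim: j => [|j IHj]; first by rewrite big_nil.
by rewrite spow_sSS IHj -addn1 iotaD big_cat /= big_seq1 addnC add0n addn1.
Qed.

Definition npaths (pi : perm_kind) (r : nat) (v : point) (gamma : seq int) :=
  count (fun P => signature pi P == gamma) (paths_from (suc pi) r v).

Lemma F_coef pi (k q x : int) gs n : 0 <= k -> 1 <= q -> 2 <= x ->
  F pi k q (x :: gs) n = npaths pi (n + (size gs).+1) (x, x + k, q) (x :: gs).
Proof.
move=> k_ge0 q_pos x_ge2; rewrite /F /= orbF ifF; last first.
  by apply/negbTE; rewrite -ltNge; lia.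
rewrite ifT // /valid_start /px /py /pz /=.
by apply/andP; split; [apply/andP; split|]; lia.
Qed.

Lemma npaths_single (x : int) n : forall (j : nat) (z : int), 1 <= z ->
  npaths P1234 n.+1 (x, x + j%:Z, z) [:: x] = spow s_series j n.
Proof.
elim: n => [|n IHn] j z z_pos; first by rewrite /npaths /= eqxx spow_s0.
rewrite /npaths [suc _]/= count_paths_from_step suc1234_pos //.
rewrite (@big_undup_subset _ _ (sucB x (x + j%:Z) 1)); last 2 first.
- by apply: sucB1_sub_suc1234_aux; lia.
- move=> w /mem_suc1234_aux [->//|[w_up _ _]] _.
  rewrite (eq_in_count (a2 := pred0)) ?count_pred0 // => p /paths_from_head -> /=.
  by rewrite w_up /px /py /= eqxx /= eqseq_cons andbF.
rewrite undup_id ?sucB_uniq // spow_s_sum /sucB.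
have -> : x + j%:Z = (x + 1) + j%:Z - 1 by lia.
rewrite irange_iota -map_comp big_map.
apply: eq_big_seq => i; rewrite mem_iota => /andP [_ i_lt_j].
rewrite [(_ \o _) i]/=; have -> : x + 1 + i%:Z = x + (i.+1)%:Z by lia.
rewrite -(IHn i.+1 1) //; apply: eq_in_count => p /paths_from_head -> /=.
by rewrite ifF // /py /=; apply/negbTE; lia.
Qed.

Lemma suc1234_layer1 v : pz v = 1 -> suc1234 v = suc2143 v.
Proof. by move=> v1; rewrite /suc1234 /suc2143 v1 /= cats0. Qed.

Lemma suc1234_layer1_closed {v w} : pz v = 1 -> w \in suc1234 v -> pz w = 1.
Proof.
move=> v1; rewrite /suc1234 v1 /= mem_undup mem_cat.
by case/orP => [/mem_sucA []|/mem_sucB []].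
Qed.

Lemma paths_from_layer1 r v :
  pz v = 1 -> paths_from suc1234 r v = paths_from suc2143 r v.
Proof.
elim: r v => [//|[//|r] IHr] v v1.
rewrite !paths_from_step -suc1234_layer1 //; congr flatten.
by apply/eq_in_map => w wv; rewrite IHr // (suc1234_layer1_closed v1 wv).
Qed.

Lemma paths_from_layer1_all {r v P} : pz v = 1 ->
  P \in paths_from suc1234 r v -> all (fun w => pz w == 1) P.
Proof.
elim: r v P => [//|[|r] IHr] v P v1; first by rewrite inE => /eqP -> /=; rewrite v1.
rewrite paths_from_step => /flatten_mapP [w wv /mapP [p pw ->]] /=.
by rewrite v1 eqxx; exact: IHr (suc1234_layer1_closed v1 wv) pw.
Qed.

Lemma rec_ends_same_layer {prev ws} {c : int} :
  pz prev = c -> all (fun w => pz w == c) ws ->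
  rec_ends P1234 prev ws = rec_ends P2143 prev ws.
Proof.
elim: ws prev => [//|w ws IHws] prev prev_c /andP [/eqP w_c ws_c] /=.
by rewrite IHws // /recorded prev_c w_c eqxx ltxx orbF.
Qed.

Lemma npaths_layer1 r v gamma :
  pz v = 1 -> npaths P1234 r v gamma = npaths P2143 r v gamma.
Proof.
move=> v1; rewrite /npaths [suc _]/= -paths_from_layer1 //.
apply: eq_in_count => P Pv; have := paths_from_layer1_all v1 Pv.
rewrite (paths_from_head Pv) /= => /andP [_ ws1].
by rewrite (rec_ends_same_layer v1 ws1).
Qed.

Lemma rec_ends1234_py prev prev' p : py prev = py prev' ->
  rec_ends P1234 prev p = rec_ends P1234 prev' p.
Proof. by case: p => //= w p same_y; rewrite /recorded same_y. Qed.

Lemma npaths_recurrence (x y g2 : int) gs (Q r : nat) : (1 <= Q)%N ->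
  2 <= g2 <= x + 1 ->
  npaths P1234 r.+2 (x, y, (Q.+1)%:Z) [:: x, g2 & gs] =
  (npaths P1234 r.+2 (x, y, Q%:Z) [:: x, g2 & gs] +
   npaths P1234 r.+1 (g2, (y + 1)%R, (Q.+1)%:Z) (g2 :: gs))%N.
Proof.
move=> Q_pos g2_range; rewrite /npaths [suc _]/= !count_paths_from_step.
rewrite !suc1234_pos; try lia.
rewrite -[absz _]/(Q.+1) suc1234_auxS //.
rewrite (@big_undup_cat_single _ _ _ _ (g2, y + 1, (Q.+1)%:Z)); last 3 first.
- by apply/mapP; exists g2; rewrite ?mem_irange.
- apply/negP => /mem_suc1234_aux [/mem_sucB [_ + _]|[_ + _]]; rewrite /pz /=; lia.
- case=> [[a b] c] /mem_sucA [b_eq c_eq _] w_neq.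
  rewrite /py /pz /= in b_eq c_eq; subst b c.
  have a_neq : a != g2 by apply: contraNneq w_neq => ->.
  rewrite (eq_in_count (a2 := pred0)) ?count_pred0 // => p /paths_from_head -> /=.
  by rewrite /py /= eqxx /= !eqseq_cons eqxx /= /px /= (negbTE a_neq).
congr (_ + _)%N.
  apply: eq_bigr => w _; apply: eq_count => p /=.
  by rewrite (rec_ends1234_py _ (x, y, Q%:Z)).
apply: eq_in_count => p /paths_from_head -> /=.
by rewrite /py /= eqxx /= !eqseq_cons eqxx.
Qed.

Theorem lemma3p5 (k q : int) (gamma : seq int) :
  0 <= k -> 1 <= q -> (1 <= size gamma)%N ->
  2 <= nth 0 gamma 0 ->
  (forall i : nat, (i.+1 < size gamma)%N ->
     2 <= nth 0 gamma i.+1 <= nth 0 gamma i + 1) ->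
  [/\ (size gamma = 1%N -> F P1234 k q gamma = spow s_series (absz k)),
      (q = 1 -> F P1234 k q gamma = F P2143 k q gamma) &
      ((2 <= size gamma)%N -> 2 <= q ->
         F P1234 k q gamma =
         sadd (F P1234 k (q - 1) gamma)
              (F P1234 (nth 0 gamma 0 + 1 - nth 0 gamma 1 + k) q (behead gamma)))].
Proof.
move=> k_ge0 q_pos; case: gamma => [//|x gs] _ /= x_ge2 gamma_steps.
split=> [gs_nil|q1|].
- case: gs gs_nil {gamma_steps} => // _; apply: functional_extensionality => n.
  have [j ->] : exists j : nat, k = j%:Z by exists (absz k); lia.
  by rewrite F_coef // addn1 npaths_single.
- by apply: functional_extensionality => n; rewrite !F_coef // npaths_layer1 // q1.
case: gs gamma_steps => [//|g2 gs] gamma_steps _ q_ge2.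
have /= g2_range := gamma_steps 0%N isT.
have [Q -> Q_pos] : exists2 Q : nat, q = (Q.+1)%:Z & (1 <= Q)%N.
  by exists (absz (q - 1)); lia.
have -> : (Q.+1)%:Z - 1 = Q%:Z by lia.
apply: functional_extensionality => n.
rewrite /sadd !F_coef /=; try lia.
have -> : g2 + (x + 1 - g2 + k) = x + k + 1 by lia.
by rewrite !addnS npaths_recurrence.
Qed.
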